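(* If $b<0$, then $\ln\rho_t\sim bt$ as $t\to\infty$, where $\rho_t=v_{-t}(\lambda_0)$.
   Context: Let $\sigma\ge 0$, $b\in\mathbb R$, and $\pi$ a $\sigma$-finite measure on $(0,\infty)$ with $\int_0^\infty (z\wedge z^2)\pi(\mathrm{d}z)<\infty$; $\Psi(q)=bq+\frac12\sigma^2q^2+\int_0^\infty(e^{-qu}-1+qu)\pi(\mathrm{d}u)$. For $\lambda\ge 0$, $t\mapsto v_t(\lambda)$ solves $\frac{\partial}{\partial t}v_t(\lambda)=-\Psi(v_t(\lambda))$, $v_0(\lambda)=\lambda$; $v_{-t}$ denotes the inverse of the strictly increasing map $\lambda\mapsto v_t(\lambda)$. Let $\rho=\inf\{z>0:\Psi(z)\ge0\}$ ($\inf\emptyset=\infty$), and fix $\lambda_0\in(0,\rho)$. *)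

From HB Require Import structures.
From mathcomp Require Import all_boot all_order all_algebra.
From mathcomp Require Import all_classical all_reals all_analysis.
Set Implicit Arguments. Unset Strict Implicit. Unset Printing Implicit Defensive.
Import Order.TTheory GRing.Theory Num.Theory.
Import numFieldNormedType.Exports.
Local Open Scope classical_set_scope.
Local Open Scope ring_scope.

(* Branching mechanism
   Psi(q) = b q + sigma^2 q^2 / 2 + \int_(0,oo) (e^{-qu} - 1 + qu) pi(du),
   the integral being taken as a real (Rintegral); it is finite for q >= 0
   under the integrability hypothesis on pi. *)
Definition Psi (R : realType) (b sigma : R)
  (pi : {measure set R -> \bar R}) (q : R) : R :=
  b * q + (sigma ^+ 2) * (q ^+ 2) / 2
  + Rintegral pi `]0, +oo[ (fun u => expR (- (q * u)) - 1 + q * u).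

(* rho = inf {z > 0 : Psi z >= 0}, as an extended real (inf of empty = +oo) *)
Definition rhoPsi (R : realType) (b sigma : R)
  (pi : {measure set R -> \bar R}) : \bar R :=
  ereal_inf [set (z%:E) | z in [set z : R | 0 < z /\ 0 <= Psi b sigma pi z]].

From HB Require Import structures.
From mathcomp Require Import all_boot all_order all_algebra.
From mathcomp Require Import all_classical all_reals all_analysis.
From mathcomp Require Import ring lra measurable_realfun.
Import Order.TTheory GRing.Theory Num.Theory.
Import numFieldNormedType.Exports.
Local Open Scope classical_set_scope.
Local Open Scope ring_scope.

(* Put u(s) = v_s(rho_t): u solves u' = -Psi(u) on [0, t], with u(t) = lambda0
   and u(0) = rho_t.  Since Psi(q) >= b q, the map s |-> u(s) e^{bs} is
   nonincreasing, whence ln rho_t >= ln lambda0 + b t.  Conversely, Psi(q)/q is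
   nondecreasing (the Levy integrand e^{-x} - 1 + x is convex and vanishes at 0)
   and tends to b as q -> 0 (dominated convergence), while Psi(lambda0) < 0
   because lambda0 < rho.  So u stays in (0, lambda0], grows at least at the
   exponential rate -Psi(lambda0)/lambda0, and below a small level d at rate at
   least -b - eps.  The time spent above d is thus bounded independently of t,
   and ln rho_t <= (b + eps) t + C. *)

Section RealFacts.
Context {R : realType}.

Lemma is_derive_continuous {f : R -> R} {x d : R} :
  is_derive x 1 f d -> {for x, continuous f}.
Proof.
by case=> df _; apply: differentiable_continuous; apply/derivable1_diffP.
Qed.

Lemma lnMexpR (y z : R) : 0 < y -> ln (y * expR z) = ln y + z.
Proof. by move=> y0; rewrite lnM ?posrE ?expR_gt0 // expRK. Qed.

Lemma ler_lnMexpR (x y z : R) : 0 < x -> 0 < y ->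
  (x <= y * expR z) = (ln x <= ln y + z).
Proof.
by move=> x0 y0; rewrite -lnMexpR // ler_ln ?posrE ?mulr_gt0 ?expR_gt0.
Qed.

Lemma ger_lnMexpR (x y z : R) : 0 < x -> 0 < y ->
  (y * expR z <= x) = (ln y + z <= ln x).
Proof.
by move=> x0 y0; rewrite -lnMexpR // ler_ln ?posrE ?mulr_gt0 ?expR_gt0.
Qed.

Lemma is_derive_gt0_left (f : R -> R) (x D e : R) :
  is_derive x 1 f D -> 0 < D -> 0 < e -> exists2 y, x - e < y < x & f y < f x.
Proof.
move=> [df <-] D0 e0.
move: df => /cvgr_gt /(_ 0 D0); rewrite near_withinE => /nbhs_ballP[r r0 rquot].
pose h := - (Num.min e r / 2).
have me : Num.min e r <= e by rewrite ge_min lexx.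
have mr : Num.min e r <= r by rewrite ge_min lexx orbT.
have m0 : 0 < Num.min e r by rewrite lt_min e0.
have [he hr h0] : [/\ - e < h, - r < h & h < 0] by rewrite /h; split; lra.
have hball : ball 0 r h by rewrite /ball /= sub0r normrN ltr0_norm //; lra.
move: (rquot h hball (ltr0_neq0 h0)).
rewrite /GRing.scale /= mulr1 nmulr_rgt0 ?invr_lt0 // subr_lt0 => fhx.
by exists (h + x) => //; apply/andP; split; lra.
Qed.

Lemma right_cvg_inf_le (A : set R) (f : R -> R) (l : R) :
  A !=set0 -> has_lbound A -> (forall s, A s -> f s <= l) ->
  f x @[x --> (inf A)^'+] --> f (inf A) -> f (inf A) <= l.
Proof.
move=> A0 Alb fA fcvg; rewrite leNgt; apply/negP => lf.
move: fcvg => /cvgr_gt /(_ l lf); rewrite near_withinE => /nbhs_ballP[r r0 rgt].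
have [a Aa ar] := inf_adherent r0 (conj A0 Alb).
have infa : inf A <= a by apply: ge_inf.
have [ea|na] := eqVneq (inf A) a; first by move: lf; rewrite ea ltNge fA.
have : l < f a.
  apply: rgt; last by rewrite lt_neqAle na.
  by rewrite /ball /= ltr0_norm ?subr_lt0 ?lt_neqAle ?na //; lra.
by rewrite ltNge fA.
Qed.

End RealFacts.

Section Growth.
Context {R : realType}.
Variables (P u : R -> R).
Hypothesis u_cvg_right : forall s : R, 0 <= s -> u x @[x --> s^'+] --> u s.
Hypothesis u_derive : forall s : R, 0 < s -> is_derive s 1 u (- P (u s)).

Let w (k s : R) := u s * expR (- (k * s)).

Lemma solution_within_continuous (a c : R) : 0 <= a -> 0 < c ->
  {within `[a, c], continuous u}.
Proof.
move=> a0 c0; apply: derivable_oo_LRcontinuous_within; split.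
- move=> x /[!in_itv] /andP[ax _].
  by have [] := u_derive _ (le_lt_trans a0 ax).
- exact: u_cvg_right.
- exact: cvg_at_left_filter (is_derive_continuous (u_derive _ c0)).
Qed.

Lemma weighted_is_derive (k s : R) : 0 < s ->
  is_derive s 1 (w k) (expR (- (k * s)) * (- P (u s) - k * u s)).
Proof.
move=> s0; have dexp : is_derive s 1 (fun s => expR (- (k * s)))
                                      (expR (- (k * s)) * - k).
  have dlin : is_derive s 1 (fun s : R => - (k * s)) (- k).
    by apply: is_derive_eq; rewrite /= scaler1.
  exact: is_derive1_comp.
apply: is_derive_eq (is_deriveM (u_derive _ s0) dexp) _.
by rewrite /GRing.scale /=; ring.
Qed.

Lemma weighted_derive1 (k s : R) : 0 < s ->
  derive1 (w k) s = expR (- (k * s)) * (- P (u s) - k * u s).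
Proof.
by move=> s0; have ? := weighted_is_derive k _ s0; rewrite derive1E derive_val.
Qed.

Lemma weighted_within_continuous (k a c : R) : 0 <= a -> 0 < c ->
  {within `[a, c], continuous (w k)}.
Proof.
move=> a0 c0 x.
have cexp : continuous (fun s : R => expR (- (k * s))).
  move=> y; apply: continuous_comp; last exact: continuous_expR.
  by apply: continuousN; apply: continuousM; [exact: cvg_cst | exact: cvg_id].
exact: continuousM (solution_within_continuous _ _ a0 c0 x)
  (@continuous_subspaceT _ _ _ _ cexp x).
Qed.

Lemma solution_growth_ge (a c k : R) : 0 <= a -> a <= c ->
  (forall s, a < s -> s < c -> k * u s <= - P (u s)) ->
  u a * expR (- (k * a)) <= u c * expR (- (k * c)).
Proof.
move=> a0 ac ku; have [<-|ac'] := eqVneq a c; first by [].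
have c0 : 0 < c by apply: le_lt_trans a0 _; rewrite lt_neqAle ac' ac.
apply: (@ger0_derive1_le_cc _ (w k) a c); rewrite ?in_itv /= ?lexx ?ac //.
- move=> x /[!in_itv] /andP[ax _].
  by have [] := weighted_is_derive k _ (le_lt_trans a0 ax).
- move=> x /[!in_itv] /andP[ax xc]; rewrite weighted_derive1 ?(le_lt_trans a0 ax) //.
  by rewrite mulr_ge0 ?expR_ge0 // subr_ge0 ku.
- exact: weighted_within_continuous.
Qed.

Lemma solution_growth_le (a c k : R) : 0 <= a -> a <= c ->
  (forall s, a < s -> s < c -> - P (u s) <= k * u s) ->
  u c * expR (- (k * c)) <= u a * expR (- (k * a)).
Proof.
move=> a0 ac ku; have [<-|ac'] := eqVneq a c; first by [].
have c0 : 0 < c by apply: le_lt_trans a0 _; rewrite lt_neqAle ac' ac.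
apply: (@ler0_derive1_le_cc _ (w k) a c); rewrite ?in_itv /= ?lexx ?ac //.
- move=> x /[!in_itv] /andP[ax _].
  by have [] := weighted_is_derive k _ (le_lt_trans a0 ax).
- move=> x /[!in_itv] /andP[ax xc]; rewrite weighted_derive1 ?(le_lt_trans a0 ax) //.
  by rewrite pmulr_rle0 ?expR_gt0 // subr_le0 ku.
- exact: weighted_within_continuous.
Qed.

End Growth.

Section BackwardSolution.
Context {R : realType}.
Context {P u : R -> R} {b t lam : R}.
Hypothesis u_cvg_right : forall s : R, 0 <= s -> u x @[x --> s^'+] --> u s.
Hypothesis u_derive : forall s : R, 0 < s -> is_derive s 1 u (- P (u s)).
Hypothesis P_ge_lin : forall q, b * q <= P q.
Hypothesis u_t : u t = lam.
Hypothesis lam_gt0 : 0 < lam.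
Hypothesis P_lt0 : forall q, 0 < q -> q <= lam -> P q < 0.

Lemma solution_lower_bound s : 0 <= s -> s <= t ->
  lam * expR (b * t) <= u s * expR (b * s).
Proof.
move=> s0 st.
have := @solution_growth_le _ P u u_cvg_right u_derive s t (- b) s0 st.
rewrite !mulNr !opprK u_t; apply => x _ _.
by rewrite lerNl -mulNr opprK P_ge_lin.
Qed.

Lemma solution_gt0 s : 0 <= s -> s <= t -> 0 < u s.
Proof.
move=> s0 st; have := @solution_lower_bound s s0 st.
have := expR_gt0 (b * s); have := mulr_gt0 lam_gt0 (expR_gt0 (b * t)).
by move=> h1 h2 /(lt_le_trans h1); rewrite pmulr_lgt0.
Qed.

Lemma solution_le_end s1 : 0 <= s1 -> s1 <= t -> u s1 <= lam.
Proof.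
(* At the first time s2 >= s1 with u s2 <= lam, the derivative -P (u s2) is
   positive, so u < lam just before s2, contradicting the choice of s2. *)
move=> s10 s1t; rewrite leNgt; apply/negP => lam_lt.
pose A := [set s | s1 <= s /\ s <= t /\ u s <= lam].
have At : A t by rewrite /A /= u_t.
have Alb : has_lbound A by exists s1 => s [].
set s2 := inf A.
have [s12 s2t] : s1 <= s2 /\ s2 <= t.
  by split; [apply: lb_le_inf => [|s []]; first exists t | exact: ge_inf].
have us2 : u s2 <= lam.
  apply: right_cvg_inf_le => [|//|s [_ []] //|]; first by exists t.
  exact: u_cvg_right _ (le_trans s10 s12).
have s12' : s1 < s2.
  by rewrite lt_neqAle s12 andbT; apply: contraTneq us2 => <-; rewrite -ltNge.
have s20 : 0 < s2 by apply: le_lt_trans s12'.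
have [y /andP[s1y ys2] uy] : exists2 y, s2 - (s2 - s1) < y < s2 & u y < u s2.
  apply: is_derive_gt0_left (u_derive _ s20) _ _; last by rewrite subr_gt0.
  by rewrite oppr_gt0 P_lt0 // solution_gt0 ?(ltW s20).
have : s2 <= y.
  apply: ge_inf => //; rewrite /A /=; split.
    by move: s1y; rewrite opprB addrC subrK => /ltW.
  by split; [apply: le_trans (ltW ys2) s2t | apply: le_trans (ltW uy) us2].
by rewrite leNgt ys2.
Qed.

Lemma solution_ndecr a c : 0 <= a -> a <= c -> c <= t -> u a <= u c.
Proof.
move=> a0 ac ct.
have := @solution_growth_ge _ P u u_cvg_right u_derive a c 0 a0 ac.
rewrite !mul0r oppr0 expR0 !mulr1; apply => s sa sc.
have [s0 st] : 0 <= s /\ s <= t.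
  by split; [apply: le_trans (ltW sa) | apply: le_trans (ltW sc) ct].
by rewrite mul0r oppr_ge0 ltW // P_lt0 ?solution_gt0 ?solution_le_end.
Qed.

Context {c0 d : R}.
Hypothesis c0_gt0 : 0 < c0.
Hypothesis P_le_c0 : forall q, 0 < q -> q <= lam -> P q <= - c0 * q.
Hypothesis d_gt0 : 0 < d.
Hypothesis d_le_lam : d <= lam.

Lemma solution_growth_c0 a c : 0 <= a -> a <= c -> c <= t ->
  u a * expR (- (c0 * a)) <= u c * expR (- (c0 * c)).
Proof.
move=> a0 ac ct; apply: (@solution_growth_ge _ P u) => // s sa sc.
have [s0 st] : 0 <= s /\ s <= t.
  by split; [apply: le_trans (ltW sa) | apply: le_trans (ltW sc) ct].
by rewrite lerNr -mulNr P_le_c0 ?solution_gt0 ?solution_le_end.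
Qed.

Lemma solution_hits_level : ln lam - ln d < c0 * t ->
  exists s1, [/\ 0 <= s1, s1 <= t, u s1 = d & c0 * (t - s1) <= ln lam - ln d].
Proof.
move=> tlarge; have t0 : 0 < t.
  rewrite -(pmulr_rgt0 _ c0_gt0); apply: le_lt_trans tlarge.
  by rewrite subr_ge0 ler_ln ?posrE.
have u0 : 0 < u 0 by apply: solution_gt0; rewrite ?lexx ?ltW.
have u0d : u 0 <= d.
  have := solution_growth_c0 _ _ (lexx 0) (ltW t0) (lexx t).
  rewrite mulr0 oppr0 expR0 mulr1 u_t ler_lnMexpR // => h.
  by apply: ltW; rewrite -ltr_ln ?posrE //; lra.
have [s1 /[!in_itv] /andP[s10 s1t] us1] : exists2 s1, s1 \in `[0, t] & u s1 = d.
  apply: IVT; first exact: ltW.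
    exact: solution_within_continuous.
  by rewrite u_t ge_min le_max u0d d_le_lam orbT.
exists s1; split => //.
have := solution_growth_c0 _ _ s10 s1t (lexx t).
rewrite us1 u_t ger_lnMexpR ?mulr_gt0 ?expR_gt0 // lnMexpR //; lra.
Qed.

Lemma ln_solution_upper (A : R) : 0 < A ->
  (forall q, 0 < q -> q <= d -> P q <= - A * q) -> ln lam - ln d < c0 * t ->
  ln (u 0) <= ln d - A * t + A / c0 * (ln lam - ln d).
Proof.
move=> A0 P_le_A tlarge.
have [s1 [s10 s1t us1 hit]] := solution_hits_level tlarge.
have u0 : 0 < u 0 by apply: solution_gt0; rewrite ?lexx ?(le_trans s10 s1t).
have : u 0 <= d * expR (- (A * s1)).
  have := @solution_growth_ge _ P u u_cvg_right u_derive 0 s1 A (lexx 0) s10.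
  rewrite mulr0 oppr0 expR0 mulr1 us1; apply => s s0 ss1.
  have s0' := ltW s0; have st := le_trans (ltW ss1) s1t.
  rewrite lerNr -mulNr P_le_A ?solution_gt0 //.
  by rewrite -us1 solution_ndecr ?(ltW ss1).
rewrite ler_lnMexpR //.
have : A * (t - s1) <= A / c0 * (ln lam - ln d).
  by rewrite -mulrA ler_pM2l // ler_pdivlMl // mulrC.
lra.
Qed.

End BackwardSolution.

Section Asymptotics.
Context {R : realType}.

Lemma near_pinfty_le_mul (k c : R) : 0 < k -> \forall t \near +oo, c <= k * t.
Proof.
move=> k0; apply: filterS (nbhs_pinfty_ge (num_real (c / k))) => t.
by rewrite ler_pdivrMr // mulrC.
Qed.

Lemma cvg_div_linear (f : R -> R) (a b : R) : b < 0 ->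
  (\forall t \near +oo, b * t + a <= f t) ->
  (forall e, 0 < e -> e < - b ->
     exists C, \forall t \near +oo, f t <= (b + e) * t + C) ->
  (fun t => f t / (b * t)) t @[t --> +oo] --> (1 : R).
Proof.
move=> b0 flow fup; apply/cvgrPdist_le => e e0.
pose e' := Num.min e 1.
have e'0 : 0 < e' by rewrite lt_min e0 ltr01.
have [e'e e'1] : e' <= e /\ e' <= 1 by rewrite !ge_min !lexx orbT.
have eb0 : 0 < e' * - b / 2 by rewrite divr_gt0 // mulr_gt0 // oppr_gt0.
have [C fC] : exists C, \forall t \near +oo, f t <= (b + e' * - b / 2) * t + C.
  by apply: fup => //; rewrite -subr_gt0; nra.
near=> t.
have t0 : 0 < t by near: t; exact: nbhs_pinfty_gt.
have lo : b * t + a <= f t by near: t.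
have up : f t <= (b + e' * - b / 2) * t + C by near: t.
have ha : - a <= e' * - b * t.
  by near: t; apply: near_pinfty_le_mul; rewrite mulr_gt0 // oppr_gt0.
have hC : C <= e' * - b / 2 * t by near: t; exact: near_pinfty_le_mul.
have x0 : 0 < - (b * t) by rewrite oppr_gt0 nmulr_rlt0.
set r := f t / (b * t).
have fE : f t = r * (b * t) by rewrite /r divfK // ltr0_neq0 // -oppr_gt0.
rewrite fE in lo up; apply: le_trans e'e.
rewrite ler_norml; apply/andP; split; rewrite -(ler_pM2r x0); nra.
Unshelve. all: end_near.
Qed.

End Asymptotics.

Section BackwardAsymptotics.
Context {R : realType}.
Context {P : R -> R} {u : R -> R -> R} {b lam : R}.
Hypothesis b_lt0 : b < 0.
Hypothesis lam_gt0 : 0 < lam.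
Hypothesis P_lam_lt0 : P lam < 0.
Hypothesis P_ge_lin : forall q, b * q <= P q.
Hypothesis P_ratio_ndecr :
  forall q1 q2, 0 < q1 -> q1 <= q2 -> P q1 / q1 <= P q2 / q2.
Hypothesis P_ratio_near0 : forall e, 0 < e -> exists2 q, 0 < q & P q / q <= b + e.
Hypothesis u_solution : forall t, 0 <= t ->
  [/\ forall s : R, 0 <= s -> u t x @[x --> s^'+] --> u t s,
      forall s : R, 0 < s -> is_derive s 1 (u t) (- P (u t s)) & u t t = lam].

Let c0 := - P lam / lam.

Let c0_gt0 : 0 < c0. Proof. by rewrite divr_gt0 // oppr_gt0. Qed.

Let P_le_c0 q : 0 < q -> q <= lam -> P q <= - c0 * q.
Proof.
move=> q0 ql; have := P_ratio_ndecr _ _ q0 ql.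
by rewrite ler_pdivrMr // /c0 !mulNr opprK.
Qed.

Let P_lt0 q : 0 < q -> q <= lam -> P q < 0.
Proof.
move=> q0 ql; apply: le_lt_trans (P_le_c0 _ q0 ql) _.
by rewrite mulNr oppr_lt0 mulr_gt0.
Qed.

Lemma ln_backward_solution_asymptotics :
  (fun t => ln (u t 0) / (b * t)) t @[t --> +oo] --> (1 : R).
Proof.
apply: (@cvg_div_linear _ _ (ln lam)) => //.
  near=> t.
  have t0 : 0 < t by near: t; exact: nbhs_pinfty_gt.
  have [ucr ud ut] := u_solution _ (ltW t0).
  have := solution_lower_bound ucr ud P_ge_lin ut _ (lexx 0) (ltW t0).
  rewrite mulr0 expR0 mulr1 ger_lnMexpR ?mulr_gt0 ?expR_gt0 //; first by rewrite addrC.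
  exact: solution_gt0 ucr ud P_ge_lin ut lam_gt0 _ (lexx 0) (ltW t0).
move=> e e0 eb.
have [q q0 Pq] := P_ratio_near0 _ e0.
pose d := Num.min q lam.
have d0 : 0 < d by rewrite lt_min q0 lam_gt0.
have [dq dlam] : d <= q /\ d <= lam by rewrite !ge_min !lexx orbT.
have A0 : 0 < - (b + e) by rewrite oppr_gt0 -ltrBrDl sub0r.
have P_le_A q' : 0 < q' -> q' <= d -> P q' <= - - (b + e) * q'.
  move=> q'0 q'd; rewrite opprK -ler_pdivrMr //.
  exact: le_trans (P_ratio_ndecr _ _ q'0 q'd) (le_trans (P_ratio_ndecr _ _ d0 dq) Pq).
exists (ln d + - (b + e) / c0 * (ln lam - ln d)).
near=> t.
have t0 : 0 < t by near: t; exact: nbhs_pinfty_gt.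
have [ucr ud ut] := u_solution _ (ltW t0).
have tlarge : ln lam - ln d < c0 * t.
  near: t; apply: filterS (near_pinfty_le_mul _ (ln lam - ln d + 1) c0_gt0) => t.
  by apply: lt_le_trans; rewrite ltrDl.
have := ln_solution_upper ucr ud P_ge_lin ut lam_gt0 P_lt0 c0_gt0 P_le_c0 d0 dlam
  _ A0 P_le_A tlarge.
by rewrite mulNr opprK; lra.
Unshelve. all: end_near.
Qed.

End BackwardAsymptotics.

Section LevyKernel.
Context {R : realType}.

Definition levy_kernel (x : R) : R := expR (- x) - 1 + x.

Lemma levy_kernel_ge0 x : 0 <= levy_kernel x.
Proof. by rewrite /levy_kernel; have := expR_ge1Dx (- x); lra. Qed.

Lemma levy_kernel_le_min x : 0 <= x -> levy_kernel x <= Num.min x (x ^+ 2).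
Proof.
move=> x0; rewrite /levy_kernel le_min; apply/andP; split.
  have : expR (- x) <= 1 by rewrite -expR0 ler_expR; lra.
  lra.
have := expR_ge1Dx x; have := expR_ge1Dx (- x); have := expR_gt0 (- x).
have : expR x * expR (- x) = 1 by rewrite -expRD subrr expR0.
rewrite expr2; nra.
Qed.

Lemma levy_kernel_mul_le q u : 0 <= q -> 0 <= u ->
  levy_kernel (q * u) <= Num.max q (q ^+ 2) * Num.min u (u ^+ 2).
Proof.
move=> q0 u0; have qu0 := mulr_ge0 q0 u0.
have m0 : 0 <= Num.max q (q ^+ 2) by rewrite le_max q0.
rewrite minr_pMr // le_min; have := levy_kernel_le_min _ qu0; rewrite le_min.
case/andP => kq kq2; apply/andP; split.
  by apply: le_trans kq _; rewrite ler_wpM2r // le_max lexx.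
by apply: le_trans kq2 _; rewrite exprMn ler_wpM2r ?exprn_ge0 // le_max lexx orbT.
Qed.

Lemma levy_kernel_scale l x : 0 <= l -> l <= 1 ->
  levy_kernel (l * x) <= l * levy_kernel x.
Proof.
move=> l0 l1; rewrite /levy_kernel.
have := convex_expR (Itv01 l0 l1) (- x) 0.
rewrite !convRE /= mulr0 addr0 expR0 mulr1 /unstable.onem -mulrN; lra.
Qed.

End LevyKernel.

Section JumpIntegral.
Context {R : realType}.
Variable pi : {measure set R -> \bar R}.

Definition jump_integral (q : R) : \bar R :=
  (\int[pi]_(u in `]0%R, +oo[) (levy_kernel (q * u))%:E)%E.

Lemma measurable_levy_kernel q :
  measurable_fun (`]0, +oo[ : set R) (fun u : R => (levy_kernel (q * u))%:E).
Proof.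
apply/measurable_EFinP; apply: measurable_funTS.
apply: measurable_funD; last exact: measurable_funM.
apply: measurable_funB => //; apply: measurableT_comp => //.
exact/measurable_funN/measurable_funM.
Qed.

Lemma jump_integral_ge0 q : (0 <= jump_integral q)%E.
Proof. by apply: integral_ge0 => u _; rewrite lee_fin levy_kernel_ge0. Qed.

Hypothesis pi_min_integrable :
  (\int[pi]_(z in `]0%R, +oo[) (Num.min z (z ^+ 2))%:E < +oo)%E.

Let itv_gt0 {u : R} : `]0, +oo[%classic u -> 0 < u.
Proof. by rewrite /= in_itv /= andbT. Qed.

Let measurable_min :
  measurable_fun (`]0, +oo[ : set R) (fun u : R => (Num.min u (u ^+ 2))%:E).
Proof.
apply/measurable_EFinP; apply: measurable_funTS.
by apply: measurable_minr => //; exact: measurable_funX.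
Qed.

Lemma jump_integral_fin_num q : 0 <= q -> jump_integral q \is a fin_num.
Proof.
move=> q0; have m0 : 0 <= Num.max q (q ^+ 2) by rewrite le_max q0.
rewrite ge0_fin_numE ?jump_integral_ge0 //.
apply: le_lt_trans
  (lte_mul_pinfty (x := (Num.max q (q ^+ 2))%:E) _ _ pi_min_integrable) => //.
rewrite -ge0_integralZl_EFin //; last first.
  by move=> u /itv_gt0 u0; rewrite lee_fin le_min !ltW ?exprn_gt0.
apply: ge0_le_integral => //.
- by move=> u _; rewrite lee_fin levy_kernel_ge0.
- exact: measurable_levy_kernel.
- exact: emeasurable_funM.
- by move=> u /itv_gt0 u0; rewrite -EFinM lee_fin levy_kernel_mul_le // ltW.
Qed.

Lemma jump_integral_le_scale q1 q2 : 0 < q1 -> q1 <= q2 ->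
  (jump_integral q1 <= (q1 / q2)%:E * jump_integral q2)%E.
Proof.
move=> q10 q12; have q20 := lt_le_trans q10 q12.
have k0 : 0 <= q1 / q2 by rewrite divr_ge0 ?ltW.
rewrite /jump_integral -ge0_integralZl_EFin //; last 2 first.
- by move=> u _; rewrite lee_fin levy_kernel_ge0.
- exact: measurable_levy_kernel.
apply: ge0_le_integral => //.
- by move=> u _; rewrite lee_fin levy_kernel_ge0.
- exact: measurable_levy_kernel.
- exact: emeasurable_funM (measurable_levy_kernel q2).
- move=> u _; rewrite -EFinM lee_fin.
  have -> : q1 * u = q1 / q2 * (q2 * u) by rewrite mulrA divfK ?gt_eqF.
  by rewrite levy_kernel_scale // ler_pdivrMr // mul1r.
Qed.

Lemma jump_integral_div_harmonic :
  (fun n => fine (jump_integral (harmonic n)) / harmonic n) @ \oo --> (0 : R).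
Proof.
pose q := @harmonic R.
have q0 n : 0 < q n by apply: harmonic_gt0.
have q1 n : q n <= 1 by rewrite /q /harmonic /= invf_le1 // ler1n.
pose f n u := ((q n)^-1 * levy_kernel (q n * u))%:E.
have f_ge0 n u : (0 <= f n u)%E.
  by rewrite lee_fin mulr_ge0 ?levy_kernel_ge0 // invr_ge0 ltW.
have mf n : measurable_fun (`]0, +oo[ : set R) (f n).
  apply/measurable_EFinP; apply: measurable_funM => //.
  by have /measurable_EFinP := measurable_levy_kernel (q n).
have f_le_sqr n u : 0 <= u -> (q n)^-1 * levy_kernel (q n * u) <= q n * u ^+ 2.
  move=> u0; have qn0 := q0 n; rewrite ler_pdivrMl //.
  have qu0 : 0 <= q n * u := mulr_ge0 (ltW qn0) u0.
  apply: le_trans (levy_kernel_le_min _ qu0) _.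
  by rewrite ge_min exprMn expr2 mulrA lexx orbT.
have f_le_min n u : 0 <= u -> (`|f n u| <= (Num.min u (u ^+ 2))%:E)%E.
  move=> u0; have qn0 := q0 n; rewrite gee0_abs // lee_fin ler_pdivrMl //.
  have := levy_kernel_mul_le _ _ (ltW qn0) u0.
  by rewrite (max_idPl _) // expr2 ger_pMl.
have f_cvg0 u : 0 <= u -> f ^~ u @ \oo --> (0 : \bar R).
  move=> u0; apply/fine_cvgP; split; first exact: nearW.
  apply: (@squeeze_cvgr _ _ _ _ (cst 0) (fun n => q n * u ^+ 2)).
  - apply: nearW => n /=; rewrite f_le_sqr // andbT.
    by rewrite mulr_ge0 ?levy_kernel_ge0 // invr_ge0 ltW.
  - exact: cvg_cst.
  - by rewrite -(mul0r (u ^+ 2)); apply: cvgM; [exact: cvg_harmonic | exact: cvg_cst].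
have min_integrable : pi.-integrable `]0, +oo[ (fun u => (Num.min u (u ^+ 2))%:E).
  apply/integrableP; split; first exact: measurable_min.
  rewrite (eq_integral (fun u : R => (Num.min u (u ^+ 2))%:E)) //.
  by move=> u /[!inE] /itv_gt0 u0; rewrite gee0_abs // lee_fin le_min !ltW ?exprn_gt0.
have [_ _] := @dominated_convergence _ _ _ pi _ (measurable_itv _) f (cst 0) _ mf
  (measurable_cst _) (aeW _ (fun u u0 => f_cvg0 u (ltW (itv_gt0 u0)))) min_integrable
  (aeW _ (fun u n u0 => f_le_min n u (ltW (itv_gt0 u0)))).
have If n : (\int[pi]_(u in `]0%R, +oo[) f n u)%E =
    ((q n)^-1 * fine (jump_integral (q n)))%:E.
  have qn0 : 0 <= (q n)^-1 by rewrite invr_ge0 ltW.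
  rewrite EFinM (fineK (jump_integral_fin_num _ (ltW (q0 n)))).
  rewrite -ge0_integralZl_EFin //.
  - by move=> u _; rewrite lee_fin levy_kernel_ge0.
  - exact: measurable_levy_kernel.
rewrite integral0 => /fine_cvgP[_]; apply: cvg_trans; apply: near_eq_cvg.
by apply: nearW => n /=; rewrite If mulrC.
Qed.

End JumpIntegral.

Section PsiFacts.
Context {R : realType}.
Variables (b sigma : R) (pi : {measure set R -> \bar R}).
Hypothesis pi_min_integrable :
  (\int[pi]_(z in `]0%R, +oo[) (Num.min z (z ^+ 2))%:E < +oo)%E.

Local Notation Psi := (Psi b sigma pi).

Lemma PsiE q :
  Psi q = b * q + sigma ^+ 2 * q ^+ 2 / 2 + fine (jump_integral pi q).
Proof. by []. Qed.

Lemma Psi_ge_lin q : b * q <= Psi q.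
Proof.
rewrite PsiE -addrA lerDl addr_ge0 ?fine_ge0 ?jump_integral_ge0 //.
by rewrite divr_ge0 // mulr_ge0 // sqr_ge0.
Qed.

Lemma Psi_ratioE q : 0 < q ->
  Psi q / q = b + sigma ^+ 2 * q / 2 + fine (jump_integral pi q) / q.
Proof. by move=> q0; rewrite PsiE; field; rewrite gt_eqF. Qed.

Lemma Psi_ratio_ndecr q1 q2 : 0 < q1 -> q1 <= q2 -> Psi q1 / q1 <= Psi q2 / q2.
Proof.
move=> q10 q12; have q20 := lt_le_trans q10 q12.
rewrite !Psi_ratioE // -!addrA lerD2l lerD //.
  by rewrite ler_pM2r // ler_wpM2l ?sqr_ge0.
have fin q : 0 < q -> jump_integral pi q \is a fin_num.
  by move=> q0; apply: jump_integral_fin_num => //; exact: ltW.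
have scale : fine (jump_integral pi q1) <= q1 / q2 * fine (jump_integral pi q2).
  have := fine_le (fin _ q10) _ (jump_integral_le_scale pi _ _ q10 q12).
  by rewrite fineM ?fin // fin_numM ?fin //; apply.
have -> : fine (jump_integral pi q2) / q2 =
    (q1 / q2 * fine (jump_integral pi q2)) / q1.
  by field; rewrite !gt_eqF.
by rewrite ler_pM2r ?invr_gt0.
Qed.

Lemma Psi_ratio_harmonic :
  (fun n => Psi (harmonic n) / harmonic n) @ \oo --> b.
Proof.
have -> : (fun n => Psi (harmonic n) / harmonic n) =
    (fun n => b + sigma ^+ 2 * harmonic n / 2 +
              fine (jump_integral pi (harmonic n)) / harmonic n).
  by apply/funext => n; rewrite Psi_ratioE // harmonic_gt0.
have sigma_cvg : (fun n => sigma ^+ 2 * harmonic n / 2) @ \oo --> (0 : R).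
  have -> : (0 : R) = sigma ^+ 2 * 0 / 2 by rewrite mulr0 mul0r.
  by apply: cvgMl; apply: cvgMr; exact: cvg_harmonic.
have := cvgD (cvgD (cvg_cst b) sigma_cvg)
  (jump_integral_div_harmonic pi pi_min_integrable).
by rewrite !addr0; apply.
Qed.

Lemma Psi_ratio_near0 e : 0 < e -> exists2 q, 0 < q & Psi q / q <= b + e.
Proof.
move=> e0; have be : b < b + e by rewrite ltrDl.
have [N _ hN] := cvgr_le _ Psi_ratio_harmonic _ be.
by exists (harmonic N); [exact: harmonic_gt0 | exact: (hN N (leqnn N))].
Qed.

Lemma Psi_lt0_lt_rho l : 0 < l -> (l%:E < rhoPsi b sigma pi)%E -> Psi l < 0.
Proof.
move=> l0 lrho; rewrite ltNge; apply/negP => Psi_ge0.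
have : (rhoPsi b sigma pi <= l%:E)%E by apply: ereal_inf_lbound; exists l.
by rewrite leNgt lrho.
Qed.

End PsiFacts.

Theorem lemma3 (R : realType) (sigma b : R) (pi : {measure set R -> \bar R})
  (v : R -> R -> R) (lambda0 : R) (rho : R -> R) :
  0 <= sigma ->
  sigma_finite (`]0, +oo[ : set R) pi ->
  (\int[pi]_(z in `]0%R, +oo[) (Num.min z (z ^+ 2))%R%:E < +oo)%E ->
  (* v_t(lambda) solves d/dt v_t(lambda) = - Psi(v_t(lambda)), v_0(lambda) = lambda *)
  (forall l : R, 0 <= l ->
     v 0 l = l /\
     (fun s => v s l) x @[x --> 0^'+] --> l /\
     (forall t : R, 0 < t ->
        is_derive t 1 (fun s => v s l) (- Psi b sigma pi (v t l)))) ->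
  0 < lambda0 -> (lambda0%:E < rhoPsi b sigma pi)%E ->
  (* rho_t = v_{-t}(lambda0): the nonnegative lambda with v_t(lambda) = lambda0 *)
  (forall t : R, 0 <= t -> 0 <= rho t /\ v t (rho t) = lambda0) ->
  b < 0 ->
  (fun t => ln (rho t) / (b * t)) x @[x --> +oo] --> (1 : R).
Proof.
move=> _ _ pi_min v_flow lam0 lam0_rho rho_back b0.
have backward t : 0 <= t ->
  [/\ forall s : R, 0 <= s -> v x (rho t) @[x --> s^'+] --> v s (rho t),
      forall s : R, 0 < s ->
        is_derive s 1 (v^~ (rho t)) (- Psi b sigma pi (v s (rho t)))
    & v t (rho t) = lambda0].
  move=> t0; have [rho0 vt] := rho_back _ t0.
  have [v0 [vcvg vder]] := v_flow _ rho0; split => // s.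
  rewrite le_eqVlt => /predU1P[<-|s0]; first by rewrite v0.
  exact: cvg_at_right_filter (is_derive_continuous (vder _ s0)).
have := ln_backward_solution_asymptotics b0 lam0
  (Psi_lt0_lt_rho b sigma pi _ lam0 lam0_rho) (Psi_ge_lin b sigma pi)
  (Psi_ratio_ndecr b sigma pi pi_min) (Psi_ratio_near0 b sigma pi pi_min) backward.
apply: cvg_trans; apply: near_eq_cvg; near=> t.
have t0 : 0 <= t by near: t; exact: nbhs_pinfty_ge.
by have [rho0 _] := rho_back t t0; rewrite /= (v_flow _ rho0).1.
Unshelve. all: end_near.
Qed.
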